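(* Let $\tau$ be any substitution whose ll and rl graphs are subfixed, and let $W=\{u\in\mathcal{A}^2 : \exists a\in\mathcal{A},\ u \text{ is a factor of } \tau(a)\}$. Then \[\mathcal{L}_2(\tau)=W\cup\{\mathrm{rl}(\tau(a))\,\mathrm{ll}(\tau(b)) : ab\in W\},\] where for a nonempty word $z$, $\mathrm{ll}(z)$ and $\mathrm{rl}(z)$ denote its leftmost and rightmost letter.
   Context: Let $\mathcal{A}$ be a finite nonempty alphabet, $\mathcal{A}^2$ the set of words of length $2$. A word $u$ is a factor of $v$ if $v=w_1uw_2$ for some words $w_1,w_2$. A substitution is a map $\tau:\mathcal{A}\to\mathcal{A}^+$ (nonempty words), extended to a concatenation-respecting map on words. The language $\mathcal{L}(\tau)$ is the set of words that are factors of $\tau^n(a)$ for some letter $a$ and some $n\ge1$, and $\mathcal{L}_2(\tau)$ is its set of words of length $2$. The ll graph (resp. rl graph) is the directed graph on vertex set $\mathcal{A}$ with exactly one edge from each letter $a$ to the leftmost (resp. rightmost) letter of $\tau(a)$. Such a graph is subfixed if for every vertex $x$, either the edge leaving $x$ goes to $x$, or it goes to a vertex $y$ whose outgoing edge goes to $y$ itself. *)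

From mathcomp Require Import all_boot.
Set Implicit Arguments. Unset Strict Implicit. Unset Printing Implicit Defensive.

(* Words over alphabet A are sequences [seq A]; a substitution is tau : A -> seq A
   (nonemptiness of images is a separate hypothesis). *)

Definition subst_word (A : finType) (tau : A -> seq A) (w : seq A) : seq A :=
  flatten (map tau w).

Definition factor (A : finType) (u v : seq A) : Prop :=
  exists w1 w2, v = w1 ++ u ++ w2.

Definition lang (A : finType) (tau : A -> seq A) (u : seq A) : Prop :=
  exists (n : nat) (a : A), 1 <= n /\ factor u (iter n (subst_word tau) [:: a]).

Definition lang2 (A : finType) (tau : A -> seq A) (u : seq A) : Prop :=
  size u = 2 /\ lang tau u.

(* leftmost / rightmost letter of a nonempty word (default unused for nonempty z) *)
Definition ll (A : finType) (d : A) (z : seq A) : A := head d z.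
Definition rl (A : finType) (d : A) (z : seq A) : A := last d z.

(* ll graph: edge a -> ll(tau a); rl graph: edge a -> rl(tau a) *)
Definition ll_edge (A : finType) (tau : A -> seq A) (a : A) : A := ll a (tau a).
Definition rl_edge (A : finType) (tau : A -> seq A) (a : A) : A := rl a (tau a).

Definition subfixed (A : finType) (g : A -> A) : Prop :=
  forall x : A, g x = x \/ g (g x) = g x.

Definition Wset (A : finType) (tau : A -> seq A) (u : seq A) : Prop :=
  size u = 2 /\ exists a : A, factor u (tau a).

From mathcomp Require Import all_boot.
Set Implicit Arguments. Unset Strict Implicit. Unset Printing Implicit Defensive.

(* A two-letter factor of tau(w) either lies inside some tau(x) or straddles the
   boundary between tau(x) and tau(y) for a factor xy of w, in which case it is
   rl(tau x) ll(tau y).  Iterating, a boundary pair of tau^(n+1)(a) comes from a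
   two-letter factor xy of tau^n(a) and equals rl(tau^k x) ll(tau^k y) for a factor
   xy of some tau(a) and some k >= 1; subfixedness makes rl_edge and ll_edge
   idempotent, so that pair is rl(tau x) ll(tau y).  Conversely rl(tau a) ll(tau b)
   is a factor of tau(tau c) whenever ab is a factor of tau c. *)

Lemma factor2_cat (A : finType) (c d : A) (s t : seq A) :
  factor [:: c; d] (s ++ t) ->
  [\/ factor [:: c; d] s, factor [:: c; d] t |
      exists s' t', s = rcons s' c /\ t = d :: t'].
Proof.
elim: s => [|x s IH] /= [w1 [w2 E]]; first by apply: Or32; exists w1, w2.
case: w1 E => [|y w1] /= [-> E].
  case: s IH E => [|z s] _ /= E; first by apply: Or33; exists [::], w2.
  by case: E => <- _; apply: Or31; exists [::], s.
have /IH [[v1 [v2 ->]]||[s' [t' [-> ->]]]] : factor [:: c; d] (s ++ t)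
  by exists w1, w2.
- by apply: Or31; exists (y :: v1), v2.
- exact: Or32.
- by apply: Or33; exists (y :: s'), t'.
Qed.

Lemma subfixed_idem (A : finType) (g : A -> A) :
  subfixed g -> forall x, g (g x) = g x.
Proof. by move=> hg x; case: (hg x) => [gx|//]; rewrite !gx. Qed.

Section Substitution.

Variables (A : finType) (tau : A -> seq A).
Hypothesis tau_neq0 : forall a, tau a != [::].

Lemma subst_word_cat s t :
  subst_word tau (s ++ t) = subst_word tau s ++ subst_word tau t.
Proof. by rewrite /subst_word map_cat flatten_cat. Qed.

Lemma subst_word1 a : subst_word tau [:: a] = tau a.
Proof. exact: cats0. Qed.

Lemma subst_word_cons a w :
  subst_word tau (a :: w) = tau a ++ subst_word tau w.
Proof. by []. Qed.

Lemma factor2_subst_word c d w :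
  factor [:: c; d] (subst_word tau w) ->
  (exists x, factor [:: c; d] (tau x)) \/
  exists x y, factor [:: x; y] w /\ c = rl x (tau x) /\ d = ll y (tau y).
Proof.
elim: w => [|x w IH]; first by case=> [[|? ?] [? ?]].
rewrite subst_word_cons => /factor2_cat [Hx|/IH|[s' [t' [Ex Ew]]]].
- by left; exists x.
- case=> [|[x' [y [[v1 [v2 ->]] Exy]]]]; first by left.
  by right; exists x', y; split=> //; exists (x :: v1), v2.
- right; case: w {IH} Ew => [|y w] // Ew.
  exists x, y; split; first by exists [::], w.
  split; first by rewrite /rl Ex last_rcons.
  by move: Ew (tau_neq0 y); rewrite subst_word_cons /ll; case: (tau y) => [|z r] // [->].
Qed.

Lemma boundary_factor_subst_word a b w :
  factor [:: a; b] w ->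
  factor [:: rl a (tau a); ll b (tau b)] (subst_word tau w).
Proof.
move=> [w1 [w2 ->]]; rewrite !subst_word_cat !subst_word_cons.
move: (tau_neq0 a) (tau_neq0 b); rewrite /rl /ll.
case/lastP: (tau a) => [|s x] // _; case: (tau b) => [|y t] // _.
exists (subst_word tau w1 ++ s), (t ++ subst_word tau w2).
by rewrite cats0 last_rcons -cats1 -!catA.
Qed.

Hypotheses (ll_subfixed : subfixed (ll_edge tau))
           (rl_subfixed : subfixed (rl_edge tau)).

Lemma factor2_iter_subst_word n a c d :
  factor [:: c; d] (iter n.+1 (subst_word tau) [:: a]) ->
  Wset tau [:: c; d] \/
  exists x y, Wset tau [:: x; y] /\ [:: c; d] = [:: rl x (tau x); ll y (tau y)].
Proof.
elim: n c d => [|n IH] c d; first by rewrite /= subst_word1; left; split=> //; exists a.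
rewrite iterS => /factor2_subst_word [[x Hx]|[x [y [/IH Hxy [-> ->]]]]].
  by left; split=> //; exists x.
right; case: Hxy => [Wxy|[x' [y' [Wxy' [-> ->]]]]]; first by exists x, y.
exists x', y'; split=> //.
by have := subfixed_idem rl_subfixed x'; have := subfixed_idem ll_subfixed y';
  rewrite /rl_edge /ll_edge => -> ->.
Qed.

End Substitution.

Theorem mainTheorem12 (A : finType) (tau : A -> seq A)
  (hA : 0 < #|A|)
  (hne : forall a : A, tau a != [::])
  (hll : subfixed (ll_edge tau))
  (hrl : subfixed (rl_edge tau)) :
  forall u : seq A,
    lang2 tau u <->
    (Wset tau u \/
     exists a b : A, Wset tau [:: a; b] /\
       u = [:: rl a (tau a); ll b (tau b)]).
Proof.
move=> u; split.
- case: u => [|c [|d [|? ?]]] [//= _ [[|n] [a [//= _]]]].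
  exact: factor2_iter_subst_word.
- case=> [[Hsize [a Ha]]|[a [b [[_ [c Hab]] ->]]]].
    by split=> //; exists 1, a; rewrite /= subst_word1.
  split=> //; exists 2, c; split=> //.
  by rewrite /= subst_word1; exact: boundary_factor_subst_word.
Qed.
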